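(* Consider the approximate first-stage problem described in the context, with $\theta\in\Theta$. If this problem remains feasible when $z$ is fixed to some integer-valued $z^\star$, then the resulting fixed problem (optimization over $b$ and $y$ only) has an integer-valued optimal solution $(b^\star,y^\star)$, even when the integrality constraints on $y$ and $b$ are relaxed.
   Context: Data: a directed graph $\mathcal{G}_\text{RV}=(\mathcal{N}_\text{RV},\mathcal{E}_\text{RV})$ of one-step rebalancing-vehicle (RV) movements, a set $\mathcal{N}_\text{SV}$ of stations, a finite set $\mathcal{V}$ of RVs each with integer capacity $\overline{b}$, horizon $T$, integer bound $\overline{y}$, costs $c_{i,j}^t\in\mathbb{R}$, $r_i^t\ge0$. A parameter vector $\theta=(\theta_0,(\theta_i^t)_{i,t})$ with $\theta_0\in\mathbb{R}$ and $\theta_i^t=([\theta_i^t]_{-\overline{y}},\dots,[\theta_i^t]_{\overline{y}-1})\in\mathbb{R}^{2\overline{y}}$ defines $\overline{V}_i^t(\cdot;\theta_i^t):[-\overline{y},\overline{y}]\to\mathbb{R}$ as the continuous piecewise linear function with $\overline{V}_i^t(0)=0$ whose slope on $[m,m+1]$ is $[\theta_i^t]_m$ for $m=-\overline{y},\dots,\overline{y}-1$, and $\overline{V}(y;\theta)=\theta_0+\sum_{t=1}^T\sum_{i\in\mathcal{N}_\text{SV}\cap\mathcal{N}_\text{RV}}\overline{V}_i^t(y_i^{-,t}-y_i^{+,t};\theta_i^t)$. The admissible parameter set is $\Theta=\{\theta: -\theta^{\max}\le[\theta_i^t]_{m}\le\theta^{\max}\ \forall m,i,t;\ [\theta_i^t]_m\ge[\theta_i^t]_{m-1}\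 \text{for } m=-\overline{y}+1,\dots,\overline{y}-1,\ \forall i,t\}$ for a constant $\theta^{\max}>0$ (so each $\overline{V}_i^t$ is convex). The approximate first-stage problem is $$\min_{z,y,b}\ \sum_{t=1}^T\Big[\sum_{(i,j)\in\mathcal{E}_\text{RV}}c_{i,j}^tz_{i,j}^t+\sum_{i\in\mathcal{N}_\text{SV}\cap\mathcal{N}_\text{RV}}r_i^t(y_i^{+,t}+y_i^{-,t})\Big]+\overline{V}(y;\theta)$$ subject to: $\sum_{(i,j)\in\mathcal{E}_\text{RV}}b_{i,j}^t=\sum_{(j,i)\in\mathcal{E}_\text{RV}}b_{j,i}^{t-1}+y_i^{+,t}-y_i^{-,t}$ and $\sum_{(i,j)\in\mathcal{E}_\text{RV}}z_{i,j}^t=\sum_{(j,i)\in\mathcal{E}_\text{RV}}z_{j,i}^{t-1}$ for $t=1,\dots,T$, $i\in\mathcal{N}_\text{RV}$; $0\le b_{i,j}^t\le\overline{b}z_{i,j}^t$ for $t=0,\dots,T$ with integers $b_{i,j}^0$ given; $0\le y_i^{+,t}\le\overline{y}$, $0\le y_i^{-,t}\le\overline{y}$; integers $z_{i,j}^0$ given with $\sum_{i,j}z_{i,j}^0=|\mathcal{V}|$; $y,b$ integer-valued; $z_{i,j}^t$ integer-valued. (Variables $y_i^{\pm,t}$ are taken to be $0$ where not defined.) *)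

From HB Require Import structures.
From mathcomp Require Import all_boot all_order all_algebra.
From mathcomp Require Import reals.
Set Implicit Arguments. Unset Strict Implicit. Unset Printing Implicit Defensive.
Import Order.TTheory GRing.Theory Num.Theory.
Local Open Scope ring_scope.

Definition isInt (R : realType) (x : R) : Prop := exists k : int, x = k%:~R.

Definition clampI (R : realType) (m : int) (x : R) : R :=
  Num.min (Num.max x m%:~R) (m%:~R + 1).

(* The continuous piecewise linear function on [-ybar, ybar] with value 0 at 0
   and slope (th m) on [m, m+1], m = -ybar, ..., ybar-1 (explicit formula). *)
Definition Vbar_it (R : realType) (ybar : nat) (th : int -> R) (x : R) : R :=
  \sum_(k < 2 * ybar)
     th (Posz k - Posz ybar) *
       (clampI (Posz k - Posz ybar) x - clampI (Posz k - Posz ybar) 0).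

(* Admissible parameter set Theta (theta_0 is unconstrained). th t i m is
   [theta_i^t]_m, relevant for t = 1..T, i in S (= N_SV ∩ N_RV),
   m = -ybar..ybar-1. *)
Definition inTheta (R : realType) (Node : finType) (S : {set Node})
    (T ybar : nat) (thmax : R) (th : nat -> Node -> int -> R) : Prop :=
  forall t i (m : int), (1 <= t <= T)%N -> i \in S ->
    (- Posz ybar <= m < Posz ybar ->
       - thmax <= th t i m <= thmax) /\
    (- Posz ybar + 1 <= m < Posz ybar -> th t i (m - 1) <= th t i m).

Definition Vbar (R : realType) (Node : finType) (S : {set Node})
    (T ybar : nat) (th0 : R) (th : nat -> Node -> int -> R)
    (yp ym : nat -> Node -> R) : R :=
  th0 + \sum_(1 <= t < T.+1) \sum_(i in S)
          Vbar_it ybar (th t i) (ym t i - yp t i).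

Definition objective (R : realType) (Node : finType) (E : rel Node)
    (S : {set Node}) (T ybar : nat) (c : nat -> Node -> Node -> R)
    (r : nat -> Node -> R) (th0 : R) (th : nat -> Node -> int -> R)
    (z b : nat -> Node -> Node -> R) (yp ym : nat -> Node -> R) : R :=
  \sum_(1 <= t < T.+1)
     ((\sum_(i : Node) \sum_(j : Node | E i j) c t i j * z t i j)
      + \sum_(i in S) r t i * (yp t i + ym t i))
  + Vbar S T ybar th0 th yp ym.

(* Linear constraints of the approximate first-stage problem (integrality
   constraints are stated separately). Nodes are N_RV; S = N_SV ∩ N_RV;
   y^{+-} is forced to 0 at nodes outside S. *)
Definition feasible (R : realType) (Node : finType) (E : rel Node)
    (S : {set Node}) (T ybar bbar : nat) (z0 b0 : Node -> Node -> int)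
    (z b : nat -> Node -> Node -> R) (yp ym : nat -> Node -> R) : Prop :=
  (forall i j, E i j -> z 0%N i j = (z0 i j)%:~R /\ b 0%N i j = (b0 i j)%:~R)
  /\ (forall t i, (1 <= t <= T)%N ->
        \sum_(j | E i j) b t i j
          = \sum_(j | E j i) b t.-1 j i + yp t i - ym t i)
  /\ (forall t i, (1 <= t <= T)%N ->
        \sum_(j | E i j) z t i j = \sum_(j | E j i) z t.-1 j i)
  /\ (forall t i j, (t <= T)%N -> E i j ->
        0 <= b t i j <= bbar%:R * z t i j)
  /\ (forall t i, (1 <= t <= T)%N ->
        if i \in S then
          (0 <= yp t i <= ybar%:R) /\ (0 <= ym t i <= ybar%:R)
        else yp t i = 0 /\ ym t i = 0).

Definition by_integral (R : realType) (Node : finType) (E : rel Node)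
    (S : {set Node}) (T : nat)
    (b : nat -> Node -> Node -> R) (yp ym : nat -> Node -> R) : Prop :=
  (forall t i j, (t <= T)%N -> E i j -> isInt (b t i j))
  /\ (forall t i, (1 <= t <= T)%N -> i \in S ->
        isInt (yp t i) /\ isInt (ym t i)).

(* Once z is fixed, the first-stage problem is a minimum-cost flow problem with
   integer capacities and a separable cost that is affine between consecutive
   integers (each V_i^t is piecewise linear with integer breakpoints).  Such a
   problem has an integral optimal flow.  Indeed, if a feasible flow has
   fractional arcs, no conserving vertex meets exactly one of them, since its
   net flow is an integer; so the fractional arcs carry a nonzero circulation.
   On the current unit cells the cost is linear, so moving along this
   circulation or its opposite does not increase it, and we stop when a first
   arc becomes integral.  Repeating this rounds every feasible flow to an
   integral one of no larger cost, and the cheapest of the finitely many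
   integral feasible flows is optimal. *)

From HB Require Import structures.
From mathcomp Require Import all_boot all_order all_algebra.
From mathcomp Require Import reals.
From mathcomp Require Import zify ring lra.
Set Implicit Arguments. Unset Strict Implicit. Unset Printing Implicit Defensive.
Import Order.TTheory GRing.Theory Num.Theory.
Local Open Scope ring_scope.

Lemma row_dependent_of_col_dependent (K : fieldType) m n (M : 'M[K]_(m, n))
    (v : 'cV_n) :
  (n <= m)%N -> v != 0 -> M *m v = 0 -> exists2 u : 'rV_m, u != 0 & u *m M = 0.
Proof.
move=> le_nm v0 Mv0.
have vker : (v^T <= kermx M^T)%MS.
  by apply/sub_kermxP; rewrite -trmx_mul Mv0 trmx0.
have rkM : (\rank M < n)%N.
  move: (mxrankS vker); rewrite mxrank_ker mxrank_tr rank_rV trmx_eq0 v0.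
  by have := rank_leq_col M; lia.
have /rowV0Pn[u /sub_kermxP uM0 u0] : kermx M != 0.
  by rewrite kermx_eq0 /row_free; apply/eqP; lia.
by exists u.
Qed.

Lemma sum_indicator_eq (T : finType) (u : T) : (\sum_(w : T) (u == w) = 1)%N.
Proof. by rewrite (bigD1 u) //= eqxx big1 // => w; rewrite eq_sym => /negbTE ->. Qed.

(* Arcs ending at [None] leave the network: flow conservation is only imposed
   at the vertices [Some v]. *)
Section Incidence.
Variables (R : fieldType) (A V : finType) (tl hd : A -> option V).

Definition incidence a (w : option V) : R := (tl a == w)%:R - (hd a == w)%:R.
Definition netflow (x : A -> R) w := \sum_a x a * incidence a w.
Definition degree (F : {set A}) w := (\sum_(a in F) ((tl a == w) + (hd a == w)))%N.
Definition touched (F : {set A}) := [set w | (0 < degree F w)%N].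

Lemma netflowE (x : A -> R) w :
  netflow x w = \sum_(a | tl a == w) x a - \sum_(a | hd a == w) x a.
Proof.
rewrite /netflow !(big_mkcond (fun a => _ == w)) -sumrB.
apply: eq_bigr => a _; rewrite /incidence.
by case: (tl a == w); case: (hd a == w) => /=; ring.
Qed.

Lemma sum_incidence a : \sum_w incidence a w = 0.
Proof. by rewrite sumrB -!natr_sum !sum_indicator_eq subrr. Qed.

Lemma sum_degree (F : {set A}) : (\sum_w degree F w = 2 * #|F|)%N.
Proof.
rewrite exchange_big -sum1_card big_distrr /=; apply: eq_bigr => a _.
by rewrite big_split /= !sum_indicator_eq.
Qed.

Lemma incidence_untouched (F : {set A}) a w :
  a \in F -> w \notin touched F -> incidence a w = 0.
Proof.
move=> aF; rewrite inE -leqNgt leqn0 sum_nat_eq0 => /forall_inP/(_ a aF).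
by rewrite addn_eq0 /incidence => /andP[/eqP-> /eqP->]; rewrite subrr.
Qed.

(* Handshake count: a touched vertex other than [None] has degree at least 2. *)
Lemma card_touched (F : {set A}) : (forall v, degree F (Some v) != 1%N) ->
  (#|touched F| <= #|F|)%N.
Proof.
move=> deg_ne1; set W := touched F.
have ends w : ((w \in W) + (w \in W) <= degree F w + (None == w))%N.
  rewrite inE; case: w => [v|]; last by case: (degree F None) => [|[|]].
  by move: (deg_ne1 v); case: (degree F (Some v)) => [|[|]].
have cardW : (\sum_w (w \in W) = #|W|)%N.
  by rewrite -sum1_card [RHS]big_mkcond; apply: eq_bigr => w _; case: (w \in W).
have : (\sum_w ((w \in W) + (w \in W)) <= \sum_w (degree F w + (None == w)))%N.
  by apply: leq_sum => w _; exact: ends.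
rewrite !big_split /= cardW sum_degree sum_indicator_eq.
move: #|W| #|F| => p q; lia.
Qed.

(* The rows of the incidence matrix of [F] on its touched vertices sum to zero,
   and by [card_touched] it has at least as many rows as columns. *)
Lemma circulation_on (F : {set A}) : F != set0 ->
  (forall v, degree F (Some v) != 1%N) ->
  exists d : A -> R, [/\ exists a, d a != 0, forall a, a \notin F -> d a = 0
    & forall w, netflow d w = 0].
Proof.
case/set0Pn=> a0 a0F deg_ne1; set W := touched F.
have W_gt0 : (0 < #|W|)%N.
  apply/card_gt0P; exists (tl a0); rewrite inE /degree (bigD1 a0) //= eqxx.
  by rewrite addnC addnS.
pose M := \matrix_(i < #|F|, j < #|W|) incidence (enum_val i) (enum_val j).
pose ones : 'cV[R]_#|W| := const_mx 1.
have rowsum0 : M *m ones = 0.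
  apply/colP => i; rewrite !mxE -[RHS](sum_incidence (enum_val i)).
  rewrite [RHS](bigID (mem W)) /= [X in _ = _ + X]big1 ?addr0; last first.
    by move=> w /incidence_untouched ->; rewrite ?enum_valP.
  by rewrite [RHS]big_enum_val; apply: eq_bigr => j _; rewrite !mxE mulr1.
have ones_neq0 : ones != 0.
  by apply/eqP => /colP/(_ (Ordinal W_gt0)); rewrite !mxE; apply/eqP; rewrite oner_eq0.
have [u u_neq0 uM0] :=
  row_dependent_of_col_dependent (card_touched deg_ne1) ones_neq0 rowsum0.
pose d a := if a \in F then u 0 (enum_rank_in a0F a) else 0.
have netd w : netflow d w = \sum_(i < #|F|) u 0 i * incidence (enum_val i) w.
  rewrite /netflow (bigID (mem F)) /= [X in _ + X]big1 ?addr0; last first.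
    by move=> a /negbTE aF; rewrite /d aF mul0r.
  by rewrite big_enum_val; apply: eq_bigr => i _; rewrite /d enum_valP enum_valK_in.
exists d; split.
- have /rV0Pn[i ui] := u_neq0; exists (enum_val i).
  by rewrite /d enum_valP enum_valK_in.
- by move=> a /negbTE aF; rewrite /d aF.
- move=> w; rewrite netd; have [wW|wW] := boolP (w \in W); last first.
    by apply: big1 => i _; rewrite (@incidence_untouched F) ?mulr0 ?enum_valP.
  transitivity ((u *m M) 0 (enum_rank_in wW w)); last by rewrite uM0 mxE.
  by rewrite mxE; apply: eq_bigr => i _; rewrite mxE enum_rankK_in.
Qed.
End Incidence.
Arguments incidence {R A V} tl hd a w.

Definition affine_on_unit_cells (R : numDomainType) (f : R -> R) :=
  forall (n : int) y, n%:~R <= y <= n%:~R + 1 ->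
    f y = f n%:~R + (y - n%:~R) * (f (n%:~R + 1) - f n%:~R).

Section UnitCells.
Variable R : archiRealFieldType.
Local Notation fl y := ((Num.floor y)%:~R : R).

Lemma floor_itv_fractional (y : R) : y \isn't a Num.int -> fl y < y < fl y + 1.
Proof.
rewrite intrEfloor => y_frac; rewrite lt_neqAle (negbTE y_frac) floor_le /=.
by rewrite -(intrD _ _ 1) floorD1_gt.
Qed.

Definition exit_time (y e : R) := ((if 0 < e then fl y + 1 else fl y) - y) / e.

Lemma exit_time_gt0 y e : y \isn't a Num.int -> e != 0 -> 0 < exit_time y e.
Proof.
move=> /floor_itv_fractional /andP[lt_fl_y lt_y_fl1] e_neq0; rewrite /exit_time.
have [e_gt0|e_le0] := ltP 0 e; first by rewrite divr_gt0 // subr_gt0.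
have e_lt0 : e < 0 by rewrite lt_neqAle e_neq0.
by rewrite ltr_ndivlMr // mul0r subr_lt0.
Qed.

Lemma shift_in_cell y e s : y \isn't a Num.int -> e != 0 ->
  0 <= s <= exit_time y e -> fl y <= y + s * e <= fl y + 1.
Proof.
move=> /floor_itv_fractional /andP[lt_fl_y lt_y_fl1] e_neq0 /andP[s_ge0].
rewrite /exit_time; have [e_gt0|e_le0] := ltP 0 e.
  by rewrite ler_pdivlMr // => ?; have := mulr_ge0 s_ge0 (ltW e_gt0); lra.
have e_lt0 : e < 0 by rewrite lt_neqAle e_neq0.
by rewrite ler_ndivlMr // => ?; have := mulr_ge0_le0 s_ge0 (ltW e_lt0); lra.
Qed.

Lemma shift_exit_int y e : e != 0 -> y + exit_time y e * e \is a Num.int.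
Proof.
move=> e_neq0; rewrite divfK // addrC subrK.
by case: ifP => _; rewrite ?rpredD ?rpred_int ?rpred1.
Qed.
End UnitCells.

Section Rounding.
Variables (R : archiRealFieldType) (A V : finType) (tl hd : A -> option V).
Variables (lo up : A -> int) (g : A -> R -> R).
Hypothesis g_affine : forall a, affine_on_unit_cells (g a).

Local Notation netflow := (netflow tl hd).
Local Notation fl y := ((Num.floor y)%:~R : R).

Definition bounded (x : A -> R) := forall a, (lo a)%:~R <= x a <= (up a)%:~R.
Definition cost (x : A -> R) := \sum_a g a (x a).
Definition fractional (x : A -> R) := [set a | x a \isn't a Num.int].
Definition slope (x : A -> R) a := g a (fl (x a) + 1) - g a (fl (x a)).
Definition shift (x d : A -> R) s a := x a + s * d a.

Lemma floor_cell (y : R) : fl y <= y <= fl y + 1.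
Proof. by rewrite floor_le -(intrD _ _ 1) ltW ?floorD1_gt. Qed.

Lemma fractional_floor_bounded x a : bounded x -> a \in fractional x ->
  (lo a)%:~R <= fl (x a) /\ fl (x a) + 1 <= (up a)%:~R.
Proof.
move=> /(_ a) /andP[lo_x x_up]; rewrite inE => x_frac; split.
  by rewrite ler_int floor_ge_int.
have x_lt_up : x a < (up a)%:~R.
  by rewrite lt_neqAle x_up andbT; apply: contraNneq x_frac => ->; rewrite rpred_int.
by rewrite -(intrD _ _ 1) ler_int lezD1 floor_lt_int.
Qed.

Lemma fractional_degree_ne1 x : (forall v, netflow x (Some v) \is a Num.int) ->
  forall v, degree tl hd (fractional x) (Some v) != 1%N.
Proof.
move=> x_int v; apply/negP; set w := Some v.
case/sum_nat_eq1 => a1 [a1F ends1 ends0].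
have rest_int : \sum_(a | a != a1) x a * incidence tl hd a w \is a Num.int.
  apply: rpred_sum => a ne_a_a1; have [aF|aF] := boolP (a \in fractional x).
    move/eqP: (ends0 a ne_a_a1 aF); rewrite addn_eq0 !eqb0 /incidence.
    by case/andP => /negbTE-> /negbTE->; rewrite subrr mulr0 rpred0.
  by move: aF; rewrite inE negbK => x_int_a; rewrite rpredM ?rpredB ?rpred_nat.
have := rpredB (x_int v) rest_int; rewrite /netflow (bigD1 a1) //= addrK.
move: a1F ends1; rewrite inE /incidence => /negP x_a1_frac.
by case: (tl a1 == w); case: (hd a1 == w) => //= _;
  rewrite ?subr0 ?sub0r ?mulr1 ?mulrN1 ?rpredN.
Qed.

Lemma netflow_shift x d s w : netflow (shift x d s) w = netflow x w + s * netflow d w.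
Proof.
rewrite /netflow mulr_sumr -big_split.
by apply: eq_bigr => a _; rewrite /shift mulrDl mulrA.
Qed.

Lemma cost_shift x d s : (forall a, fl (x a) <= shift x d s a <= fl (x a) + 1) ->
  cost (shift x d s) = cost x + s * \sum_a slope x a * d a.
Proof.
move=> cell; rewrite /cost mulr_sumr -big_split /=; apply: eq_bigr => a _.
rewrite (g_affine _ (cell a)) (g_affine _ (floor_cell (x a))) /slope /shift; ring.
Qed.

Lemma round_step_along x d : bounded x ->
  (forall a, a \notin fractional x -> d a = 0) -> (exists a, d a != 0) ->
  (forall w, netflow d w = 0) -> \sum_a slope x a * d a <= 0 ->
  exists x', [/\ bounded x', forall w, netflow x' w = netflow x w,
    cost x' <= cost x & (#|fractional x'| < #|fractional x|)%N].
Proof.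
move=> x_bd d_supp [a1 da1] d_circ slope_le0.
have d_frac a : d a != 0 -> a \in fractional x.
  by apply: contraR => /d_supp ->; rewrite eqxx.
have d_nonint a : d a != 0 -> x a \isn't a Num.int by move/d_frac; rewrite inE.
have [a0 da0 a0_min] :=
  @arg_minP _ _ _ a1 (fun a => d a != 0) (fun a => exit_time (x a) (d a)) da1.
set s := exit_time (x a0) (d a0).
have s_gt0 : 0 < s by exact: exit_time_gt0 (d_nonint a0 da0) da0.
have cell a : fl (x a) <= shift x d s a <= fl (x a) + 1.
  have [da0'|da] := eqVneq (d a) 0; first by rewrite /shift da0' mulr0 addr0 floor_cell.
  by rewrite shift_in_cell ?d_nonint // (ltW s_gt0) a0_min.
exists (shift x d s); split.
- move=> a; have [da0'|da] := eqVneq (d a) 0; first by rewrite /shift da0' mulr0 addr0.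
  have [lo_fl fl_up] := fractional_floor_bounded x_bd (d_frac a da).
  by case/andP: (cell a) => ? ?; rewrite (le_trans lo_fl) ?(le_trans _ fl_up).
- by move=> w; rewrite netflow_shift d_circ mulr0 addr0.
- by rewrite cost_shift // gerDl pmulr_rle0.
- rewrite (cardsD1 a0 (fractional x)) d_frac // add1n ltnS subset_leq_card //.
  apply/subsetP => a; rewrite !inE; apply: contraNT; rewrite negb_and !negbK.
  case/orP => [/eqP-> | x_int]; first exact: shift_exit_int.
  by rewrite /shift (d_supp a) ?mulr0 ?addr0 // inE negbK.
Qed.

Lemma round_step x : bounded x -> (forall v, netflow x (Some v) \is a Num.int) ->
  fractional x != set0 ->
  exists x', [/\ bounded x', forall w, netflow x' w = netflow x w,
    cost x' <= cost x & (#|fractional x'| < #|fractional x|)%N].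
Proof.
move=> x_bd x_int frac_neq0.
have [d [[a1 da1] d_supp d_circ]] :=
  circulation_on R frac_neq0 (fractional_degree_ne1 x_int).
have [le0|gt0] := leP (\sum_a slope x a * d a) 0.
  exact: round_step_along x_bd d_supp (ex_intro _ a1 da1) d_circ le0.
apply: (@round_step_along x (fun a => - d a)) => //.
- by move=> a /d_supp ->; rewrite oppr0.
- by exists a1; rewrite oppr_eq0.
- move=> w; rewrite /netflow; under eq_bigr do rewrite mulNr.
  by rewrite sumrN -/(netflow d w) d_circ oppr0.
- by under eq_bigr do rewrite mulrN; rewrite sumrN oppr_le0 ltW.
Qed.

Lemma round_to_integral x : bounded x -> (forall v, netflow x (Some v) \is a Num.int) ->
  exists x', [/\ forall a, x' a \is a Num.int, bounded x',
    forall w, netflow x' w = netflow x w & cost x' <= cost x].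
Proof.
have [n] := ubnP #|fractional x|; elim: n x => // n IH x /ltnSE frac_le x_bd x_int.
have [frac0|frac_neq0] := eqVneq (fractional x) set0.
  by exists x; split=> // a; apply: contraT => x_frac; rewrite -(in_set0 a) -frac0 inE.
have [x1 [x1_bd x1_net x1_cost x1_frac]] := round_step x_bd x_int frac_neq0.
have x1_int v : netflow x1 (Some v) \is a Num.int by rewrite x1_net.
have [x' [x'_int x'_bd x'_net x'_cost]] :=
  IH x1 (leq_trans x1_frac frac_le) x1_bd x1_int.
exists x'; split => //; first by move=> w; rewrite x'_net x1_net.
exact: le_trans x'_cost x1_cost.
Qed.

Definition box_width := (\max_a `|up a - lo a|%N).+1.
Definition lattice_point (p : {ffun A -> 'I_box_width}) a : R := (lo a + p a)%:~R.

Lemma lattice_point_onto x : bounded x -> (forall a, x a \is a Num.int) ->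
  exists p, forall a, lattice_point p a = x a.
Proof.
move=> x_bd x_int; exists [ffun a => inord `|Num.floor (x a) - lo a|%N] => a.
have /andP[lo_x x_up] := x_bd a.
have lo_fl : lo a <= Num.floor (x a) by rewrite floor_ge_int.
have fl_up : Num.floor (x a) <= up a.
  by rewrite -ltzD1 floor_lt_int intrD (le_lt_trans x_up) // ltrDl ltr01.
have fits : (`|Num.floor (x a) - lo a|%N < box_width)%N.
  rewrite ltnS; apply: leq_trans (leq_bigmax a).
  by rewrite -lez_nat !abszE !ger0_norm ?subr_ge0 ?lerD2r // (le_trans lo_fl).
rewrite /lattice_point ffunE inordK // abszE ger0_norm ?subr_ge0 // subrKC.
by apply/eqP; rewrite -intrEfloor.
Qed.

Theorem integral_optimal_flow (N : V -> R) : (forall v, N v \is a Num.int) ->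
  (exists x, bounded x /\ forall v, netflow x (Some v) = N v) ->
  exists xs, [/\ forall a, xs a \is a Num.int, bounded xs,
    forall v, netflow xs (Some v) = N v &
    forall x, bounded x -> (forall v, netflow x (Some v) = N v) -> cost xs <= cost x].
Proof.
move=> N_int [x0 [x0_bd x0_net]].
pose admissible p := [forall a, (lo a)%:~R <= lattice_point p a <= (up a)%:~R]
  && [forall v, netflow (lattice_point p) (Some v) == N v].
have round x : bounded x -> (forall v, netflow x (Some v) = N v) ->
    exists2 p, admissible p & cost (lattice_point p) <= cost x.
  move=> x_bd x_net.
  have [|x' [x'_int x'_bd x'_net x'_cost]] := round_to_integral x_bd.
    by move=> v; rewrite x_net.
  have [p x'E] := lattice_point_onto x'_bd x'_int.
  exists p; last by rewrite /cost (eq_bigr (fun a => g a (x' a))) // => a _; rewrite x'E.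
  apply/andP; split; apply/forallP; first by move=> a; rewrite x'E.
  by move=> v; rewrite -x_net -x'_net; apply/eqP/eq_bigr => a _; rewrite x'E.
have [p1 p1_adm _] := round x0 x0_bd x0_net.
have [p0 /andP[/forallP p0_bd /forallP p0_net] p0_min] :=
  @arg_minP _ _ _ p1 admissible (fun p => cost (lattice_point p)) p1_adm.
exists (lattice_point p0); split => [a||v|x x_bd x_net]; first exact: rpred_int.
- exact: p0_bd.
- exact/eqP.
- have [p p_adm p_cost] := round x x_bd x_net.
  exact: le_trans (p0_min p p_adm) p_cost.
Qed.
End Rounding.

Section AffineOnUnitCells.
Variable R : numDomainType.

Lemma affine_on_unit_cells_sum n (F : 'I_n -> R -> R) :
  (forall k, affine_on_unit_cells (F k)) ->
  affine_on_unit_cells (fun y => \sum_(k < n) F k y).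
Proof.
move=> F_aff m y y_cell; rewrite -sumrB mulr_sumr -big_split /=.
by apply: eq_bigr => k _; exact: F_aff.
Qed.

Lemma affine_on_unit_cells_scale_shift (f : R -> R) (k e : R) :
  affine_on_unit_cells f -> affine_on_unit_cells (fun y => k * (f y - e)).
Proof. by move=> f_aff n y /f_aff ->; ring. Qed.
End AffineOnUnitCells.

Section Clamp.
Variable R : realType.

Lemma clampI_below (m : int) (y : R) : y <= m%:~R -> clampI m y = m%:~R.
Proof. by move=> y_le; rewrite /clampI max_r // min_l // lerDl. Qed.

Lemma clampI_above (m : int) (y : R) : m%:~R + 1 <= y -> clampI m y = m%:~R + 1.
Proof.
move=> le_y; have m_le : m%:~R <= m%:~R + 1 :> R by rewrite lerDl.
by rewrite /clampI max_l ?(le_trans m_le) // min_r.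
Qed.

Lemma clampI_id (m : int) (y : R) : m%:~R <= y <= m%:~R + 1 -> clampI m y = y.
Proof. by case/andP => m_le le_m1; rewrite /clampI max_l // min_l. Qed.

Lemma clampI_affine (m : int) : affine_on_unit_cells (@clampI R m).
Proof.
move=> n y /andP[n_le le_n1].
have n_le1 : n%:~R <= n%:~R + 1 :> R by rewrite lerDl.
case: (ltgtP n m) => [lt_nm|lt_mn|<-].
- have : n%:~R + 1 <= m%:~R :> R by rewrite -(intrD _ _ 1) ler_int lezD1.
  by move=> le_n1m; rewrite !clampI_below ?(le_trans le_n1) ?(le_trans n_le1) //; ring.
- have : m%:~R + 1 <= n%:~R :> R by rewrite -(intrD _ _ 1) ler_int lezD1.
  by move=> le_m1n; rewrite !clampI_above ?(le_trans le_m1n) ?(le_trans _ n_le1) //; ring.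
- by rewrite !clampI_id ?lexx ?n_le1 ?n_le ?le_n1 ?lerDl //; ring.
Qed.

Lemma Vbar_it_affine ybar (th : int -> R) : affine_on_unit_cells (Vbar_it ybar th).
Proof.
apply: affine_on_unit_cells_sum => k.
exact/affine_on_unit_cells_scale_shift/clampI_affine.
Qed.
End Clamp.

Section TripleSums.
Variable R : nmodType.

Lemma sum_pair (I J : finType) (F : I * J -> R) : \sum_q F q = \sum_i \sum_j F (i, j).
Proof. by rewrite [RHS]pair_big; apply: eq_bigr => -[i j]. Qed.

Lemma sum_triple (I J K : finType) (F : I * J * K -> R) :
  \sum_q F q = \sum_i \sum_j \sum_k F (i, j, k).
Proof. by rewrite [RHS]pair_big [RHS]pair_big; apply: eq_bigr => -[[i j] k]. Qed.

Lemma sum_if_pair_eq (I J : finType) (i0 : I) (j0 : J) (G : I -> J -> R) :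
  \sum_i \sum_j (if (i, j) == (i0, j0) then G i j else 0) = G i0 j0.
Proof.
rewrite (bigD1 i0) //= [X in _ + X]big1 ?addr0 => [|i ne_i]; last first.
  by apply: big1 => j _; rewrite xpair_eqE (negbTE ne_i).
rewrite (bigD1 j0) //= eqxx [X in _ + X]big1 ?addr0 // => j ne_j.
by rewrite xpair_eqE (negbTE ne_j) andbF.
Qed.
End TripleSums.

Lemma unlift_vertex_eq n (h k : 'I_n.+1) (s : 'I_n) (T : eqType) (p : bool) (i i' : T) :
  (omap (fun s' => (p, s', i')) (unlift h k) == Some (p, s, i))
  = ((k, i') == (lift h s, i)).
Proof.
case: (unliftP h k) => [s'|] ->; rewrite /= xpair_eqE; last first.
  by rewrite (negbTE (neq_lift h s)).
by rewrite (inj_eq (@Some_inj _)) !xpair_eqE eqxx (inj_eq (@lift_inj _ h)).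
Qed.

Lemma ord_of_succ n t : (1 <= t <= n)%N -> exists s : 'I_n, t = s.+1.
Proof. by case: t => // t lt_tn; exists (Ordinal lt_tn). Qed.

Section FirstStageNetwork.
Variables (R : realType) (Node : finType) (E : rel Node) (S : {set Node})
  (bbar ybar T : nat) (c : nat -> Node -> Node -> R) (r : nat -> Node -> R)
  (th0 : R) (th : nat -> Node -> int -> R) (z0 b0 : Node -> Node -> int)
  (zs : nat -> Node -> Node -> int).

(* Vertex [(false, s, i)] carries the balance of station [i] at time [s.+1].
   Arc [inl (inl (k, i, j))] carries [b^k_ij] from station [i] at time [k] to
   station [j] at time [k.+1]; an end at a time outside 1..T is [None].  The
   relay vertex [(true, s, i)] sends [y^+] (arc [inl (inr (true, s, i))]) to
   the station, gets [y^-] (arc [inl (inr (false, s, i))]) from it, and sends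
   the difference [y^- - y^+] along arc [inr (s, i)] to [None]: that arc
   carries the value function, so that every arc cost depends on a single
   flow value. *)
Definition vertex := (bool * 'I_T * Node)%type.
Definition arc := ('I_T.+1 * Node * Node + bool * 'I_T * Node + 'I_T * Node)%type.

Definition arc_tail (a : arc) : option vertex :=
  match a with
  | inl (inl (k, i, _)) => omap (fun s => (false, s, i)) (unlift ord0 k)
  | inl (inr (p, s, i)) => Some (p, s, i)
  | inr (s, i) => Some (true, s, i)
  end.

Definition arc_head (a : arc) : option vertex :=
  match a with
  | inl (inl (k, _, j)) => omap (fun s => (false, s, j)) (unlift ord_max k)
  | inl (inr (p, s, i)) => Some (~~ p, s, i)
  | inr _ => None
  end.

Local Notation netflow := (netflow arc_tail arc_head).

Lemma sum_barc_tail (x : arc -> R) s i :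
  \sum_(q | arc_tail (inl (inl q)) == Some (false, s, i)) x (inl (inl q))
  = \sum_j x (inl (inl (lift ord0 s, i, j))).
Proof.
rewrite big_mkcond sum_triple /=.
under eq_bigr => k _ do under eq_bigr => i' _ do rewrite unlift_vertex_eq.
rewrite (eq_bigr _ (fun k _ => exchange_big _ _ _ _ _ _)) exchange_big /=.
by apply: eq_bigr => j _; rewrite sum_if_pair_eq.
Qed.

Lemma sum_barc_head (x : arc -> R) s j :
  \sum_(q | arc_head (inl (inl q)) == Some (false, s, j)) x (inl (inl q))
  = \sum_i x (inl (inl (lift ord_max s, i, j))).
Proof.
rewrite big_mkcond sum_triple /= exchange_big /=.
under eq_bigr => i _ do under eq_bigr => k _ do under eq_bigr => j' _ do
  rewrite unlift_vertex_eq.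
by apply: eq_bigr => i _; rewrite sum_if_pair_eq.
Qed.

Lemma sum_yarc_tail (x : arc -> R) (v : vertex) :
  \sum_(q | arc_tail (inl (inr q)) == Some v) x (inl (inr q)) = x (inl (inr v)).
Proof. by apply: big_pred1 => -[[p s] i]; exact: (inj_eq (@Some_inj _)). Qed.

Lemma sum_yarc_head (x : arc -> R) p s i :
  \sum_(q | arc_head (inl (inr q)) == Some (p, s, i)) x (inl (inr q))
  = x (inl (inr (~~ p, s, i))).
Proof.
apply: big_pred1 => -[[p' s'] i'] /=.
by rewrite (inj_eq (@Some_inj _)) !xpair_eqE eqb_negLR.
Qed.

Lemma netflow_station (x : arc -> R) s i :
  netflow x (Some (false, s, i)) =
    \sum_j x (inl (inl (lift ord0 s, i, j))) + x (inl (inr (false, s, i)))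
    - (\sum_j x (inl (inl (lift ord_max s, j, i))) + x (inl (inr (true, s, i)))).
Proof.
rewrite netflowE !big_sumType sum_barc_tail sum_barc_head sum_yarc_tail sum_yarc_head.
by rewrite [X in _ + X - _]big_pred0 ?[X in _ - (_ + X)]big_pred0 ?addr0 // => -[].
Qed.

Lemma netflow_relay (x : arc -> R) s i :
  netflow x (Some (true, s, i)) =
    x (inl (inr (true, s, i))) + x (inr (s, i)) - x (inl (inr (false, s, i))).
Proof.
rewrite netflowE !big_sumType sum_yarc_tail sum_yarc_head.
rewrite (big_pred1 (s, i)) => [|[s' i']]; last exact: (inj_eq (@Some_inj _)).
rewrite !big_pred0 /= ?add0r ?addr0 // => -[[k i'] j] /=; by case: unlift.
Qed.

Definition flow_of (b : nat -> Node -> Node -> R) (yp ym : nat -> Node -> R)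
    (a : arc) : R :=
  match a with
  | inl (inl (k, i, j)) => if E i j then b k i j else 0
  | inl (inr (p, s, i)) => (if p then yp else ym) s.+1 i
  | inr (s, i) => ym s.+1 i - yp s.+1 i
  end.

Definition lower (a : arc) : int :=
  match a with
  | inl (inl (k, i, j)) => if E i j && (k == 0 :> nat) then b0 i j else 0
  | inl (inr _) => 0
  | inr (_, i) => if i \in S then - ybar%:Z else 0
  end.

Definition upper (a : arc) : int :=
  match a with
  | inl (inl (k, i, j)) =>
      if E i j then (if k == 0 :> nat then b0 i j else bbar%:Z * zs k i j) else 0
  | inl (inr (_, _, i)) | inr (_, i) => if i \in S then ybar%:Z else 0
  end.

Definition arc_cost (a : arc) (y : R) : R :=
  match a with
  | inl (inl _) => 0
  | inl (inr (_, s, i)) => if i \in S then r s.+1 i * y else 0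
  | inr (s, i) => if i \in S then Vbar_it ybar (th s.+1 i) y else 0
  end.

Lemma arc_cost_affine a : affine_on_unit_cells (arc_cost a).
Proof.
case: a => [[[[k i] j]|[[p s] i]]|[s i]] /=.
- by move=> n y _; rewrite subrr mulr0 addr0.
- by move=> n y _ /=; case: (i \in S); ring.
- rewrite /arc_cost; case: (i \in S); first exact: Vbar_it_affine.
  by move=> n y _; rewrite subrr mulr0 addr0.
Qed.

Lemma netflow_flow_of_station b yp ym s i :
  netflow (flow_of b yp ym) (Some (false, s, i)) =
    \sum_(j | E i j) b s.+1 i j + ym s.+1 i - (\sum_(j | E j i) b s j i + yp s.+1 i).
Proof.
rewrite netflow_station /= -!big_mkcond.
by rewrite /bump leq0n leqNgt ltn_ord add0n add1n.
Qed.

Lemma netflow_flow_of_relay b yp ym s i :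
  netflow (flow_of b yp ym) (Some (true, s, i)) = 0.
Proof. by rewrite netflow_relay /=; ring. Qed.

Lemma cost_flow_of b yp ym :
  cost arc_cost (flow_of b yp ym) = \sum_(1 <= t < T.+1) \sum_(i in S)
    (r t i * (yp t i + ym t i) + Vbar_it ybar (th t i) (ym t i - yp t i)).
Proof.
rewrite /cost !big_sumType /= big1 ?add0r // sum_triple sum_pair big_bool /=.
rewrite big_add1 /= big_mkord -!big_split /=; apply: eq_bigr => s _.
rewrite -!big_split [RHS]big_mkcond /=; apply: eq_bigr => i _.
by case: (i \in S); rewrite ?addr0 //; ring.
Qed.

Local Notation z := (fun t i j => (zs t i j)%:~R : R).

Lemma objective_flow_of b yp ym :
  objective E S T ybar c r th0 th z b yp ym
  = \sum_(1 <= t < T.+1) \sum_i \sum_(j | E i j) c t i j * z t i j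
    + th0 + cost arc_cost (flow_of b yp ym).
Proof.
rewrite cost_flow_of /objective /Vbar big_split /=.
under [X in _ = _ + _ + X]eq_bigr do rewrite big_split /=.
by rewrite big_split /=; ring.
Qed.

Local Notation feasible := (feasible E S T ybar bbar z0 b0 z).

Lemma flow_of_bounded b yp ym : feasible b yp ym -> bounded lower upper (flow_of b yp ym).
Proof.
case=> init [_ [_ [bcap ycap]]] [[[[k i] j]|[[p s] i]]|[s i]] /=.
- case Eij: (E i j) => /=; last by rewrite lexx.
  have [k0|k0] := eqVneq (k : nat) 0%N.
    by have [_ b0E] := init i j Eij; rewrite k0 b0E lexx.
  by rewrite intrM -pmulrn mulr0z; exact: (bcap k i j (ltn_ord k) Eij).
- rewrite mulr0z; have := ycap s.+1 i (ltn_ord s).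
  case: (i \in S); first by rewrite -pmulrn; case: p => -[].
  by rewrite mulr0z; case: p => -[yp0 ym0]; rewrite ?yp0 ?ym0 lexx.
- have := ycap s.+1 i (ltn_ord s); case: (i \in S) => [[/andP[? ?] /andP[? ?]]|[-> ->]].
    by rewrite mulrNz -pmulrn; apply/andP; split; lra.
  by rewrite subrr mulr0z lexx.
Qed.

Lemma flow_of_balanced b yp ym : feasible b yp ym ->
  forall v, netflow (flow_of b yp ym) (Some v) = 0.
Proof.
case=> _ [bal _] [[[] s] i]; first exact: netflow_flow_of_relay.
by rewrite netflow_flow_of_station (bal s.+1 i (ltn_ord s)); ring.
Qed.

Definition decode_b (xs : arc -> R) t i j := xs (inl (inl (inord t, i, j))).
Definition decode_y (p : bool) (xs : arc -> R) t i :=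
  if insub t.-1 is Some s then xs (inl (inr (p, s, i))) else 0.

Lemma decode_y_succ p xs (s : 'I_T) i : decode_y p xs s.+1 i = xs (inl (inr (p, s, i))).
Proof. by rewrite /decode_y /= valK. Qed.

Lemma bounded_fixed (xs : arc -> R) a : bounded lower upper xs ->
  lower a = upper a -> xs a = (lower a)%:~R.
Proof.
by move=> /(_ a) /andP[lo_x x_up] eq_lu; apply/le_anti; rewrite lo_x eq_lu x_up.
Qed.

Lemma flow_of_decode xs : bounded lower upper xs ->
  (forall v, netflow xs (Some v) = 0) ->
  forall a, flow_of (decode_b xs) (decode_y true xs) (decode_y false xs) a = xs a.
Proof.
move=> xs_bd xs_bal [[[[k i] j]|[[p s] i]]|[s i]] /=.
- case Eij: (E i j); first by rewrite /decode_b inord_val.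
  by rewrite (bounded_fixed xs_bd) /= Eij ?mulr0z.
- by case: p; rewrite decode_y_succ.
- by have := xs_bal (true, s, i); rewrite netflow_relay !decode_y_succ; lra.
Qed.

Lemma decode_feasible b1 yp1 ym1 xs : feasible b1 yp1 ym1 -> bounded lower upper xs ->
  (forall v, netflow xs (Some v) = 0) ->
  feasible (decode_b xs) (decode_y true xs) (decode_y false xs).
Proof.
move=> [init1 [_ [zbal [bcap1 _]]]] xs_bd xs_bal.
have decodeE := flow_of_decode xs_bd xs_bal.
have decode_bal v :
    netflow (flow_of (decode_b xs) (decode_y true xs) (decode_y false xs)) (Some v) = 0.
  by rewrite -(xs_bal v); apply: eq_bigr => a _; rewrite decodeE.
have decode_b0 i j : E i j -> decode_b xs 0 i j = (b0 i j)%:~R.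
  by move=> Eij; rewrite /decode_b (bounded_fixed xs_bd) /= Eij inordK.
split; [|split; [|split; [|split]]].
- by move=> i j Eij; have [z0E _] := init1 i j Eij; rewrite decode_b0.
- move=> t i /ord_of_succ [s ->].
  by have := decode_bal (false, s, i); rewrite netflow_flow_of_station; lra.
- exact: zbal.
- move=> t i j tT Eij; have [t0|t_gt0] := eqVneq t 0%N.
    by have [_ b1_0] := init1 i j Eij; rewrite t0 decode_b0 // -b1_0; apply: bcap1.
  have := xs_bd (inl (inl (inord t, i, j))); rewrite -decodeE /= Eij inordK ?ltnS //.
  by rewrite (negbTE t_gt0) mulr0z intrM -pmulrn.
- move=> t i /ord_of_succ [s ->].
  have := xs_bd (inl (inr (true, s, i))); rewrite -decodeE.
  have := xs_bd (inl (inr (false, s, i))); rewrite -decodeE /= mulr0z.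
  case: (i \in S) => [|/andP[? ?] /andP[? ?]]; first by rewrite -pmulrn.
  by split; apply/le_anti/andP; split; rewrite // mulr0z.
Qed.

Lemma cost_flow_of_decode xs : bounded lower upper xs ->
  (forall v, netflow xs (Some v) = 0) ->
  cost arc_cost (flow_of (decode_b xs) (decode_y true xs) (decode_y false xs))
  = cost arc_cost xs.
Proof. by move=> xs_bd xs_bal; apply: eq_bigr => a _; rewrite flow_of_decode. Qed.

Lemma decode_integral xs : (forall a, xs a \is a Num.int) ->
  by_integral E S T (decode_b xs) (decode_y true xs) (decode_y false xs).
Proof.
move=> xs_int; split => [t i j _ _ | t i /ord_of_succ [s ->] _].
  exact/intrP/xs_int.
by rewrite !decode_y_succ; split; apply/intrP/xs_int.
Qed.
End FirstStageNetwork.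

Arguments arc_tail {Node T} a.
Arguments arc_head {Node T} a.

Theorem proposition3 (R : realType) (Node : finType) (E : rel Node)
    (S : {set Node}) (nV : nat) (bbar ybar T : nat)
    (c : nat -> Node -> Node -> R) (r : nat -> Node -> R)
    (thmax th0 : R) (th : nat -> Node -> int -> R)
    (z0 b0 : Node -> Node -> int)
    (zs : nat -> Node -> Node -> int) :
  0 < thmax ->
  inTheta S T ybar thmax th ->
  (forall t i, (1 <= t <= T)%N -> i \in S -> 0 <= r t i) ->
  (\sum_(i : Node) \sum_(j : Node | E i j) z0 i j = Posz nV)%R ->
  (* the problem remains feasible with z fixed to the integer-valued zs *)
  (exists (b : nat -> Node -> Node -> R) (yp ym : nat -> Node -> R),
      feasible E S T ybar bbar z0 b0 (fun t i j => (zs t i j)%:~R) b yp ym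
      /\ by_integral E S T b yp ym) ->
  (* the fixed problem, with integrality of b, y relaxed, has an
     integer-valued optimal solution *)
  exists (bs : nat -> Node -> Node -> R) (yps yms : nat -> Node -> R),
    feasible E S T ybar bbar z0 b0 (fun t i j => (zs t i j)%:~R) bs yps yms
    /\ by_integral E S T bs yps yms
    /\ forall (b : nat -> Node -> Node -> R) (yp ym : nat -> Node -> R),
         feasible E S T ybar bbar z0 b0 (fun t i j => (zs t i j)%:~R) b yp ym ->
         objective E S T ybar c r th0 th (fun t i j => (zs t i j)%:~R) bs yps yms
         <= objective E S T ybar c r th0 th (fun t i j => (zs t i j)%:~R) b yp ym.
Proof.
move=> _ _ _ _ [b1 [yp1 [ym1 [feas1 _]]]].
have [xs [xs_int xs_bd xs_bal xs_opt]] :=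
  integral_optimal_flow (@arc_cost_affine R Node S ybar T r th) (fun=> rpred0 _)
    (ex_intro _ _ (conj (flow_of_bounded feas1) (flow_of_balanced feas1))).
exists (decode_b xs), (decode_y true xs), (decode_y false xs); split; [|split].
- exact: decode_feasible feas1 xs_bd xs_bal.
- exact: decode_integral xs_int.
- move=> b yp ym feas.
  rewrite !objective_flow_of lerD2l (cost_flow_of_decode r th xs_bd xs_bal).
  exact: xs_opt (flow_of_bounded feas) (flow_of_balanced feas).
Qed.
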